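(* Let $d\ge 2$, $\omega=e^{2\pi i/d}$, $Z=\sum_{k=0}^{d-1}\omega^k|k\rangle\langle k|$, and for $r\in[0,1]$ let $\mathcal{G}_r(\rho)=r\rho+(1-r)Z\rho Z^\dagger$ be the dephasing channel on $\mathbb{C}^d$. For any $r_1,r_2\in[0,1]$, a single-system probe is sufficient for optimally distinguishing $\mathcal{G}_{r_1}$ and $\mathcal{G}_{r_2}$: the maximum of the success probability over single-system probes equals its maximum over all probes, including entangled probes with an arbitrary ancilla.
   Context: Two channels $\mathcal{N}_1,\mathcal{N}_2$ on $\mathbb{C}^d$, chosen with equal priors $1/2$, are discriminated in a single shot. A single-system probe is a state $\rho$ on $\mathbb{C}^d$ with success probability $\frac12+\frac14\|\mathcal{N}_1(\rho)-\mathcal{N}_2(\rho)\|_1$; a general (possibly entangled) probe is a state $\rho_{AB}$ on $\mathbb{C}^d\otimes\mathbb{C}^{d'}$ (any finite $d'$) with the channel acting on $A$, with success probability $\frac12+\frac14\|(\mathcal{N}_1\otimes\mathrm{id})(\rho_{AB})-(\mathcal{N}_2\otimes\mathrm{id})(\rho_{AB})\|_1$; $\|\cdot\|_1$ is the trace norm. *)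

From HB Require Import structures.
From mathcomp Require Import all_boot all_order all_algebra.
From mathcomp Require Import complex.
From mathcomp Require mxtens.
From mathcomp Require Import reals trigo.

Set Implicit Arguments.
Unset Strict Implicit.
Unset Printing Implicit Defensive.

Import Order.TTheory GRing.Theory Num.Theory.
Local Open Scope ring_scope.
Local Open Scope complex_scope.

Section Defs.
Variable R : realType.
Local Notation C := R[i].

Definition adj m n (A : 'M[C]_(m, n)) : 'M[C]_(n, m) := (map_mx conjc A)^T.

Definition psd n (A : 'M[C]_n) : Prop :=
  adj A = A /\ forall v : 'rV[C]_n, 0 <= (v *m A *m adj v) 0 0.

Definition is_state n (rho : 'M[C]_n) : Prop := psd rho /\ \tr rho = 1.

(* trace norm ||A||_1 = tr sqrt(A^dagger A) = sum of the square roots of the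
   eigenvalues of A^dagger A (given by the spectral decomposition). *)
Definition trnorm n (A : 'M[C]_n) : C :=
  \sum_(i < n) sqrtC (spectral_diag (adj A *m A) 0 i).

Definition omega (d : nat) : C :=
  (cos (2 * pi / d%:R))%:C + 'i * (sin (2 * pi / d%:R))%:C.

Definition Zmx (d : nat) : 'M[C]_d := diag_mx (\row_(k < d) omega d ^+ k).

Definition dephasing (d : nat) (r : R) (rho : 'M[C]_d) : 'M[C]_d :=
  r%:C *: rho + (1 - r)%:C *: (Zmx d *m rho *m adj (Zmx d)).

(* (N (x) id) acting on C^d (x) C^d'; the index p of 'I_(d * d') corresponds
   to the pair (i, a) = mxtens_unindex p, i the system index, a the ancilla
   index.  For a linear map N this is the usual N (x) id:
   ((N (x) id) X)_{(i,a),(j,b)} = (N (X_{ab}))_{ij}, where X_{ab} is the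
   (a,b) block of X. *)
Definition chan_tens_id (d d' : nat) (N : 'M[C]_d -> 'M[C]_d)
    (X : 'M[C]_(d * d')) : 'M[C]_(d * d') :=
  \matrix_(p, q)
    let ia := mxtens.mxtens_unindex p in
    let jb := mxtens.mxtens_unindex q in
    N (\matrix_(k, l) X (mxtens.mxtens_index (k, ia.2))
                        (mxtens.mxtens_index (l, jb.2))) ia.1 jb.1.

Definition psucc_single (d : nat) (N1 N2 : 'M[C]_d -> 'M[C]_d) (rho : 'M[C]_d) : C :=
  1 / 2%:R + 1 / 4%:R * trnorm (N1 rho - N2 rho).

Definition psucc_gen (d d' : nat) (N1 N2 : 'M[C]_d -> 'M[C]_d)
    (rho : 'M[C]_(d * d')) : C :=
  1 / 2%:R + 1 / 4%:R * trnorm (chan_tens_id N1 rho - chan_tens_id N2 rho).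

End Defs.

(* For a real D and states s, t, the eigenvalues of D (s - t) are D (a_i - b_i),
   where a and b are the diagonals of s and t in an eigenbasis; both are
   probability vectors, so the trace norm is at most 2 |D|.  The difference of the
   outputs of G_r1 and G_r2 on any probe, entangled or not, is of this form with
   D = r1 - r2 and t = U s U^* (U = Z, resp. Z (x) 1).  The uniform superposition
   |+> attains the bound: Z|+> is orthogonal to |+> because the d-th roots of unity
   sum to zero, so the eigenvalues have modulus at most |D| while their squares sum
   to tr (D (s - t))^2 = 2 D^2, which forces their moduli to sum to at least 2 |D|. *)

From HB Require Import structures.
From mathcomp Require Import all_boot all_order all_algebra.
From mathcomp Require Import complex reals trigo.
From mathcomp Require Import sesquilinear spectral.
From mathcomp Require mxtens.
From mathcomp Require Import ring.

Set Implicit Arguments.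
Unset Strict Implicit.
Unset Printing Implicit Defensive.

Import Order.TTheory GRing.Theory Num.Theory.
Local Open Scope ring_scope.

Section SpectralTraceNorm.
Variable C : numClosedFieldType.
Local Open Scope sesquilinear_scope.

Lemma char_poly_similar n (P A : 'M[C]_n) : P \in unitmx ->
  char_poly (invmx P *m A *m P) = char_poly A.
Proof.
move=> Pu; rewrite /char_poly /char_poly_mx.
have XE : ('X%:M : 'M[{poly C}]_n) =
    map_mx polyC (invmx P) *m 'X%:M *m map_mx polyC P.
  by rewrite -mulmxA -scalar_mxC mulmxA -map_mxM mulVmx // map_mx1 mul1mx.
rewrite {1}XE !map_mxM -mulmxBl -mulmxBr !det_mulmx !det_map_mx mulrC mulrA.
by rewrite -rmorphM -det_mulmx mulmxV // det1 mul1r.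
Qed.

Lemma char_poly_diag n (v : 'rV[C]_n) :
  char_poly (diag_mx v) = \prod_(i < n) ('X - (v 0 i)%:P).
Proof.
rewrite char_poly_trig ?diag_mx_trig //.
by apply: eq_bigr => i _; rewrite mxE eqxx mulr1n.
Qed.

(* Similar diagonal matrices have the same characteristic polynomial, hence
   the same diagonal up to permutation. *)
Lemma eq_big_similar_diag n (P P' : 'M[C]_n) (v w : 'rV[C]_n) (f : C -> C) :
  P \in unitmx -> P' \in unitmx ->
  invmx P *m diag_mx v *m P = invmx P' *m diag_mx w *m P' ->
  \sum_(i < n) f (v 0 i) = \sum_(i < n) f (w 0 i).
Proof.
move=> Pu P'u /(congr1 char_poly); rewrite !char_poly_similar // !char_poly_diag.
have prodE (u : 'rV[C]_n) : \prod_(i < n) ('X - (u 0 i)%:P) =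
    \prod_(x <- [seq u 0 i | i <- enum 'I_n]) ('X - x%:P).
  by rewrite big_map big_enum.
have sumE (u : 'rV[C]_n) :
    \sum_(i < n) f (u 0 i) = \sum_(x <- [seq u 0 i | i <- enum 'I_n]) f x.
  by rewrite big_map big_enum.
by rewrite !prodE !sumE => /prod_XsubC_eq; apply: perm_big.
Qed.

Lemma trmxC_mul_unitary n (U : 'M[C]_n) : U \is unitarymx -> U^t* *m U = 1%:M.
Proof. by move=> /unitarymxP /mulmx1C. Qed.

Lemma mxtrace_unitary_conj n (U A : 'M[C]_n) : U \is unitarymx ->
  \tr (U *m A *m U^t*) = \tr A.
Proof. by move=> /trmxC_mul_unitary UU; rewrite mxtrace_mulC mulmxA UU mul1mx. Qed.

Lemma unitary_conjM n (U A B : 'M[C]_n) : U \is unitarymx ->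
  U *m A *m U^t* *m (U *m B *m U^t*) = U *m (A *m B) *m U^t*.
Proof.
by move=> /trmxC_mul_unitary UU; rewrite !mulmxA -(mulmxA _ (U^t*) U) UU mulmx1.
Qed.

Lemma hermitian_spectral_decomposition n (X : 'M[C]_n) : X^t* = X ->
  X = (spectralmx X)^t* *m diag_mx (spectral_diag X) *m spectralmx X.
Proof.
move=> XX; have /orthomx_spectralP : X \is normalmx.
  by apply/hermitian_normalmx/is_hermitianmxP; rewrite expr0 scale1r XX.
by rewrite invmx_unitary ?spectral_unitarymx.
Qed.

Lemma hermitian_spectral_diag_mx n (X : 'M[C]_n) : X^t* = X ->
  spectralmx X *m X *m (spectralmx X)^t* = diag_mx (spectral_diag X).
Proof.
move=> /hermitian_spectral_decomposition {2}->.
have Qu := spectral_unitarymx X.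
by rewrite !mulmxA mulmxtVK // (unitarymxP Qu) mul1mx.
Qed.

Lemma spectral_diag_real n (X : 'M[C]_n) i : X^t* = X ->
  spectral_diag X 0 i \is Num.real.
Proof.
move=> XX; apply: (mxOverP (hermitian_spectral_diag_real _)).
by apply/is_hermitianmxP; rewrite expr0 scale1r XX.
Qed.

Lemma hermitian_sum_spectral_diag_sqr n (X : 'M[C]_n) : X^t* = X ->
  \sum_(i < n) spectral_diag X 0 i ^+ 2 = \tr (X *m X).
Proof.
move=> XX; have Qu := spectral_unitarymx X.
rewrite -(mxtrace_unitary_conj _ Qu) -unitary_conjM //.
rewrite hermitian_spectral_diag_mx // mulmx_diag mxtrace_diag.
by apply: eq_bigr => i _; rewrite mxE.
Qed.

Definition trace_norm n (A : 'M[C]_n) : C :=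
  \sum_(i < n) sqrtC (spectral_diag (A^t* *m A) 0 i).

Lemma trace_norm_hermitian n (X : 'M[C]_n) : X^t* = X ->
  trace_norm X = \sum_(i < n) `|spectral_diag X 0 i|.
Proof.
move=> XX; set Q := spectralmx X; set l := spectral_diag X.
have Qu : Q \is unitarymx := spectral_unitarymx X.
have XXh : (X^t* *m X)^t* = X^t* *m X by rewrite trmx_mul map_mxM trmxCK.
have sqr_spectrum : invmx Q *m diag_mx (\row_i (l 0 i ^+ 2)) *m Q =
    invmx (spectralmx (X^t* *m X)) *m diag_mx (spectral_diag (X^t* *m X)) *m
    spectralmx (X^t* *m X).
  rewrite !invmx_unitary ?spectral_unitarymx // -hermitian_spectral_decomposition //.
  have dec := hermitian_spectral_decomposition XX; rewrite -/Q -/l in dec.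
  rewrite XX {1 2}dec -!mulmxA (mulmxA Q) (unitarymxP Qu) mul1mx.
  by rewrite !mulmxA -(mulmxA (Q^t*) (diag_mx l)) mulmx_diag.
rewrite /trace_norm -(eq_big_similar_diag sqrtC _ _ sqr_spectrum)
  ?unitarymx_unit ?spectral_unitarymx //.
apply: eq_bigr => i _; rewrite mxE -real_normK ?spectral_diag_real //.
by rewrite sqrCK.
Qed.

End SpectralTraceNorm.

Section DensityMatrices.
Variable C : numClosedFieldType.
Local Open Scope sesquilinear_scope.

Definition density_mx n (t : 'M[C]_n) : Prop :=
  [/\ t^t* = t, forall v : 'rV[C]_n, 0 <= (v *m t *m v^t*) 0 0 & \tr t = 1].

Lemma density_diag_conj_ge0 m n (A : 'M[C]_(m, n)) (t : 'M[C]_n) i :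
  density_mx t -> 0 <= (A *m t *m A^t*) i i.
Proof.
case=> _ t_psd _; have -> : (A *m t *m A^t*) i i = (row i A *m t *m (row i A)^t*) 0 0.
  rewrite !mxE; apply: eq_bigr => k _; rewrite !mxE; congr (_ * _).
  by apply: eq_bigr => j _; rewrite !mxE.
exact: t_psd.
Qed.

Lemma density_sum_diag_conj n (U t : 'M[C]_n) : U \is unitarymx -> density_mx t ->
  \sum_i (U *m t *m U^t*) i i = 1.
Proof. by move=> Uu [_ _ <-]; rewrite -(mxtrace_unitary_conj t Uu). Qed.

Lemma density_diag_conj_le1 n (U t : 'M[C]_n) i :
  U \is unitarymx -> density_mx t -> (U *m t *m U^t*) i i <= 1.
Proof.
move=> Uu tD; rewrite -(density_sum_diag_conj Uu tD) (bigD1 i) //= lerDl.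
by apply: sumr_ge0 => j _; apply: density_diag_conj_ge0.
Qed.

Lemma density_unitary_conj n (U t : 'M[C]_n) : U \is unitarymx -> density_mx t ->
  density_mx (U *m t *m U^t*).
Proof.
move=> Uu [th t_psd t1]; split.
- by rewrite !trmx_mul !map_mxM trmxCK th mulmxA.
- move=> v; have -> : v *m (U *m t *m U^t*) *m v^t* = v *m U *m t *m (v *m U)^t*.
    by rewrite trmx_mul map_mxM !mulmxA.
  exact: t_psd.
- by rewrite mxtrace_unitary_conj.
Qed.

Lemma hermitian_scale_diff n (D : C) (s t : 'M[C]_n) :
  D \is Num.real -> s^t* = s -> t^t* = t -> (D *: (s - t))^t* = D *: (s - t).
Proof.
move=> Dr sh th; rewrite -{2}sh -{2}th; apply/matrixP => i j.
by rewrite !mxE rmorphM rmorphB /= (conj_Creal Dr).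
Qed.

Lemma spectral_diag_scale_diff n (D : C) (s t : 'M[C]_n) i :
  D \is Num.real -> s^t* = s -> t^t* = t ->
  let Q := spectralmx (D *: (s - t)) in
  spectral_diag (D *: (s - t)) 0 i = D * ((Q *m s *m Q^t*) i i - (Q *m t *m Q^t*) i i).
Proof.
move=> Dr sh th Q.
have diagE := hermitian_spectral_diag_mx (hermitian_scale_diff Dr sh th).
have -> : spectral_diag (D *: (s - t)) 0 i = diag_mx (spectral_diag (D *: (s - t))) i i.
  by rewrite mxE eqxx mulr1n.
rewrite -diagE -/Q.
by rewrite -scalemxAr -scalemxAl mulmxBr mulmxBl !mxE.
Qed.

Lemma trace_norm_scale_diff_le n (D : C) (s t : 'M[C]_n) :
  D \is Num.real -> density_mx s -> density_mx t ->
  trace_norm (D *: (s - t)) <= `|D| *+ 2.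
Proof.
move=> Dr sD tD; have [sh _ _] := sD; have [th _ _] := tD.
rewrite trace_norm_hermitian ?hermitian_scale_diff //.
under eq_bigr => i _ do rewrite spectral_diag_scale_diff // normrM.
set Q := spectralmx _; have Qu : Q \is unitarymx := spectral_unitarymx _.
rewrite -mulr_sumr -mulr_natr ler_wpM2l //.
apply: (le_trans (ler_sum _ (fun i _ => ler_normB _ _))); rewrite big_split /=.
rewrite !(eq_bigr _ (fun i _ => ger0_norm (density_diag_conj_ge0 Q i _))) //.
by rewrite !density_sum_diag_conj.
Qed.

Lemma trace_norm_scale_diff_orthogonal n (D : C) (s t : 'M[C]_n) :
  D \is Num.real -> density_mx s -> density_mx t ->
  \tr (s *m s) = 1 -> \tr (t *m t) = 1 -> \tr (s *m t) = 0 ->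
  trace_norm (D *: (s - t)) = `|D| *+ 2.
Proof.
move=> Dr sD tD ss1 tt1 st0; apply/eqP; rewrite eq_le trace_norm_scale_diff_le //=.
have [sh _ _] := sD; have [th _ _] := tD; have Xh := hermitian_scale_diff Dr sh th.
rewrite trace_norm_hermitian //; set l := spectral_diag _.
have l_real i : l 0 i \is Num.real := spectral_diag_real i Xh.
have l_le i : `|l 0 i| <= `|D|.
  rewrite /l spectral_diag_scale_diff // normrM ler_piMr //.
  set Q := spectralmx _; have Qu : Q \is unitarymx := spectral_unitarymx _.
  have [a0 b0] := (density_diag_conj_ge0 Q i sD, density_diag_conj_ge0 Q i tD).
  have [a1 b1] := (density_diag_conj_le1 i Qu sD, density_diag_conj_le1 i Qu tD).
  rewrite real_ler_norml ?rpredB ?ger0_real // lerBrDr lerBlDr; apply/andP; split.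
  - by apply: le_trans a0; rewrite addrC subr_le0.
  - by apply: le_trans a1 _; rewrite lerDl.
have sum_sqr : \sum_i l 0 i ^+ 2 = D ^+ 2 *+ 2.
  rewrite hermitian_sum_spectral_diag_sqr // -scalemxAl -scalemxAr !mxtraceZ.
  rewrite mulmxBl !mulmxBr !linearB /= [\tr (t *m s)]mxtrace_mulC st0 ss1 tt1.
  by rewrite subr0 sub0r opprK mulrA -expr2 mulr2n mulrDr mulr1.
have [->|D0] := eqVneq D 0; first by rewrite normr0 mul0rn sumr_ge0.
have D_gt0 : 0 < `|D| by rewrite normr_gt0.
rewrite -(ler_pM2l D_gt0) mulrnAr -expr2 real_normK // -sum_sqr mulr_sumr.
by apply: ler_sum => i _; rewrite -real_normK // expr2 ler_wpM2r.
Qed.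

Definition unitary_mixture n (p : C) (U t : 'M[C]_n) : 'M[C]_n :=
  p *: t + (1 - p) *: (U *m t *m U^t*).

Lemma unitary_mixtureB n (p q : C) (U t : 'M[C]_n) :
  unitary_mixture p U t - unitary_mixture q U t = (p - q) *: (t - U *m t *m U^t*).
Proof.
rewrite /unitary_mixture opprD addrACA -!scalerBl.
have -> : 1 - p - (1 - q) = - (p - q) by ring.
by rewrite scaleNr -scalerBr.
Qed.

Lemma trace_norm_unitary_mixtureB_le n (p q : C) (U t : 'M[C]_n) :
  p \is Num.real -> q \is Num.real -> U \is unitarymx -> density_mx t ->
  trace_norm (unitary_mixture p U t - unitary_mixture q U t) <= `|p - q| *+ 2.
Proof.
move=> pr qr Uu tD; rewrite unitary_mixtureB.
exact: trace_norm_scale_diff_le (rpredB pr qr) tD (density_unitary_conj Uu tD).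
Qed.

Lemma diag_mx_trmxC n (w : 'rV[C]_n) : (diag_mx w)^t* = diag_mx (map_mx Num.conj w).
Proof. by rewrite tr_diag_mx map_diag_mx. Qed.

Lemma diag_mx_unitary n (w : 'rV[C]_n) :
  (forall i, `|w 0 i| = 1) -> diag_mx w \is unitarymx.
Proof.
move=> w1; apply/unitarymxP; rewrite diag_mx_trmxC mulmx_diag -diag_const_mx.
by congr diag_mx; apply/rowP => i; rewrite !mxE -normCK w1 expr1n.
Qed.

Lemma unitary_mixture_diag_mxE n (p : C) (w : 'rV[C]_n) (t : 'M[C]_n) i j :
  unitary_mixture p (diag_mx w) t i j =
  p * t i j + (1 - p) * (w 0 i * t i j * (w 0 j)^*).
Proof. by rewrite /unitary_mixture diag_mx_trmxC mul_mx_diag mul_diag_mx !mxE. Qed.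

Definition uniform_state d : 'M[C]_d := const_mx d%:R^-1.

Lemma uniform_state_density d : (0 < d)%N -> density_mx (uniform_state d).
Proof.
move=> d_gt0; have d_neq0 : d%:R != 0 :> C by rewrite pnatr_eq0 -lt0n.
split.
- by apply/matrixP => i j; rewrite !mxE conj_Creal // rpredV ?realn.
- move=> v; set e := const_mx 1 : 'rV[C]_d.
  have -> : uniform_state d = d%:R^-1 *: (e^t* *m e).
    by apply/matrixP => i j; rewrite !mxE big_ord1 !mxE conjC1 !mulr1.
  rewrite -scalemxAr -scalemxAl mxE mulr_ge0 ?invr_ge0 //.
  have -> : v *m (e^t* *m e) *m v^t* = v *m e^t* *m (v *m e^t*)^t*.
    by rewrite trmx_mul map_mxM trmxCK !mulmxA.
  by rewrite mxE big_ord1 !mxE -normCK exprn_ge0.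
- rewrite /mxtrace (eq_bigr (fun _ => d%:R^-1)) => [|i _]; last by rewrite mxE.
  by rewrite sumr_const card_ord -[_ *+ d]mulr_natr mulVf.
Qed.

Lemma uniform_state_sqr d : (0 < d)%N ->
  uniform_state d *m uniform_state d = uniform_state d.
Proof.
move=> d_gt0; have d_neq0 : d%:R != 0 :> C by rewrite pnatr_eq0 -lt0n.
apply/matrixP => i j; rewrite !mxE.
rewrite (eq_bigr (fun _ => d%:R^-1 * d%:R^-1)) => [|k _]; last by rewrite !mxE.
by rewrite sumr_const card_ord -[_ *+ d]mulr_natr -mulrA mulVf // mulr1.
Qed.

Lemma mxtrace_uniform_state_diag_conj d (w : 'rV[C]_d) : \sum_i w 0 i = 0 ->
  \tr (uniform_state d *m (diag_mx w *m uniform_state d *m (diag_mx w)^t*)) = 0.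
Proof.
move=> w0; rewrite /mxtrace big1 // => k _; rewrite mxE.
rewrite (eq_bigr (fun l => w 0 l * (d%:R^-1 * d%:R^-1 * (w 0 k)^*))) => [|l _].
  by rewrite -mulr_suml w0 mul0r.
by rewrite diag_mx_trmxC mul_mx_diag mul_diag_mx !mxE; ring.
Qed.

Lemma trace_norm_unitary_mixtureB_uniform d (p q : C) (w : 'rV[C]_d) :
  (0 < d)%N -> p \is Num.real -> q \is Num.real ->
  (forall i, `|w 0 i| = 1) -> \sum_i w 0 i = 0 ->
  trace_norm (unitary_mixture p (diag_mx w) (uniform_state d) -
              unitary_mixture q (diag_mx w) (uniform_state d)) = `|p - q| *+ 2.
Proof.
move=> d_gt0 pr qr w1 w0; have Wu := diag_mx_unitary w1.
have rhoD := uniform_state_density d_gt0; have [_ _ rho1] := rhoD.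
rewrite unitary_mixtureB trace_norm_scale_diff_orthogonal ?rpredB //.
- exact: density_unitary_conj.
- by rewrite uniform_state_sqr.
- by rewrite unitary_conjM // uniform_state_sqr // mxtrace_unitary_conj.
- exact: mxtrace_uniform_state_diag_conj.
Qed.
End DensityMatrices.

Section Dephasing.
Variable R : realType.
Local Notation C := R[i].
Local Open Scope complex_scope.
Local Open Scope sesquilinear_scope.

Lemma adjE m n (A : 'M[C]_(m, n)) : adj A = A^t*.
Proof. by rewrite /adj map_trmx. Qed.

Lemma trnormE n (A : 'M[C]_n) : trnorm A = trace_norm A.
Proof. by rewrite /trnorm /trace_norm adjE. Qed.

Lemma is_stateE n (t : 'M[C]_n) : is_state t <-> density_mx t.
Proof.
split=> [[[th t_psd] t1] | [th t_psd t1]].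
- split; [by rewrite -adjE | by move=> v; rewrite -adjE | exact: t1].
- by split; [split=> [|v]; rewrite adjE | exact: t1].
Qed.

Lemma real_complex_real (x : R) : x%:C \is Num.real.
Proof. by apply/complex_realP; exists x. Qed.

Definition expi (t : R) : C := cos t +i* sin t.

Lemma expiD a b : expi a * expi b = expi (a + b).
Proof. rewrite /expi; simpc; rewrite cosD sinD; congr (_ +i* _); exact: addrC. Qed.

Lemma expiMn t k : expi t ^+ k = expi (t *+ k).
Proof.
elim: k => [|k IHk]; first by rewrite /expi mulr0n cos0 sin0.
by rewrite exprS IHk expiD mulrS.
Qed.

Lemma norm_expi t : `|expi t| = 1.
Proof.
apply/eqP; rewrite -(@eqrXn2 _ 2) // expr1n normCK /expi; simpc.
by rewrite -!expr2 cos2Dsin2 mulrC addNr.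
Qed.

Lemma omega_expi d : omega R d = expi (2 * pi / d%:R).
Proof. by rewrite /omega /expi; simpc. Qed.

Lemma norm_omegaX d k : `|omega R d ^+ k| = 1.
Proof. by rewrite normrX omega_expi norm_expi expr1n. Qed.

Lemma omegaXn d : (0 < d)%N -> omega R d ^+ d = 1.
Proof.
move=> d_gt0; rewrite omega_expi expiMn -[_ *+ d]mulr_natr.
rewrite divfK ?pnatr_eq0 -?lt0n //.
by rewrite /expi mulr_natl cos2pi sin2pi.
Qed.

Lemma omega_neq1 d : (2 <= d)%N -> omega R d != 1.
Proof.
move=> d_ge2; rewrite omega_expi /expi; apply/negP => /eqP [] cos1 _.
have d_gt0 : (0 : R) < d%:R by rewrite ltr0n (leq_trans _ d_ge2).
have angle_gt0 : (0 : R) < 2 * pi / d%:R by rewrite divr_gt0 // mulr_gt0 // pi_gt0.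
have angle_le_pi : 2 * pi / d%:R <= (pi : R).
  by rewrite ler_pdivrMr // [X in _ <= X]mulrC ler_pM2r ?pi_gt0 // ler_nat.
have := @cos_inj R (2 * pi / d%:R) 0.
rewrite !in_itv /= (ltW angle_gt0) angle_le_pi lexx pi_ge0 cos1 cos0.
move=> /(_ isT isT erefl).
by move=> angle0; move: angle_gt0; rewrite angle0 ltxx.
Qed.

Lemma sum_omegaX d : (2 <= d)%N -> \sum_(k < d) omega R d ^+ k = 0.
Proof.
move=> d_ge2; have := subrX1 (omega R d) d.
rewrite omegaXn ?subrr; last by case: d d_ge2.
by move/esym/eqP; rewrite mulf_eq0 subr_eq0 (negPf (omega_neq1 d_ge2)) => /eqP.
Qed.

Lemma dephasingE d r (t : 'M[C]_d) :
  dephasing r t = unitary_mixture r%:C (Zmx R d) t.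
Proof. by rewrite /dephasing /unitary_mixture adjE rmorphB rmorph1. Qed.

(* Z (x) 1 on C^d (x) C^d', in the index convention of chan_tens_id. *)
Definition Zmx_tens_id d d' : 'M[C]_(d * d') :=
  diag_mx (\row_p omega R d ^+ (mxtens.mxtens_unindex p).1).

Lemma chan_tens_id_dephasingE d d' r (t : 'M[C]_(d * d')) :
  chan_tens_id (@dephasing R d r) t = unitary_mixture r%:C (Zmx_tens_id d d') t.
Proof.
apply/matrixP => p q; rewrite mxE /= dephasingE !unitary_mixture_diag_mxE !mxE.
by rewrite !mxtens.mxtens_unindexK.
Qed.

Lemma Zmx_unitary d : Zmx R d \is unitarymx.
Proof. by apply: diag_mx_unitary => k; rewrite mxE norm_omegaX. Qed.

Lemma Zmx_tens_id_unitary d d' : Zmx_tens_id d d' \is unitarymx.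
Proof. by apply: diag_mx_unitary => p; rewrite mxE norm_omegaX. Qed.

Lemma trnorm_dephasingB_le d r1 r2 (t : 'M[C]_d) : is_state t ->
  trnorm (dephasing r1 t - dephasing r2 t) <= `|r1%:C - r2%:C| *+ 2.
Proof.
move=> /is_stateE tD; rewrite !dephasingE trnormE.
by rewrite trace_norm_unitary_mixtureB_le ?real_complex_real ?Zmx_unitary.
Qed.

Lemma trnorm_chan_tens_id_dephasingB_le d d' r1 r2 (t : 'M[C]_(d * d')) :
  is_state t ->
  trnorm (chan_tens_id (dephasing r1) t - chan_tens_id (dephasing r2) t)
    <= `|r1%:C - r2%:C| *+ 2.
Proof.
move=> /is_stateE tD; rewrite !chan_tens_id_dephasingE trnormE.
by rewrite trace_norm_unitary_mixtureB_le ?real_complex_real ?Zmx_tens_id_unitary.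
Qed.

Lemma trnorm_dephasingB_uniform d r1 r2 : (2 <= d)%N ->
  trnorm (dephasing r1 (uniform_state C d) - dephasing r2 (uniform_state C d))
    = `|r1%:C - r2%:C| *+ 2.
Proof.
move=> d_ge2; rewrite !dephasingE trnormE.
rewrite trace_norm_unitary_mixtureB_uniform ?real_complex_real //.
- exact: leq_trans d_ge2.
- by move=> k; rewrite mxE norm_omegaX.
- by rewrite -[RHS](sum_omegaX d_ge2); apply: eq_bigr => k _; rewrite mxE.
Qed.
End Dephasing.

Local Open Scope complex_scope.

Theorem theorem3 (R : realType) (d : nat) (r1 r2 : R) :
  (2 <= d)%N -> 0 <= r1 <= 1 -> 0 <= r2 <= 1 ->
  exists rho : 'M[R[i]]_d,
    is_state rho /\
    (forall sigma : 'M[R[i]]_d, is_state sigma ->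
       psucc_single (@dephasing R d r1) (@dephasing R d r2) sigma
       <= psucc_single (@dephasing R d r1) (@dephasing R d r2) rho) /\
    (forall (d' : nat) (tau : 'M[R[i]]_(d * d')), is_state tau ->
       psucc_gen (@dephasing R d r1) (@dephasing R d r2) tau
       <= psucc_single (@dephasing R d r1) (@dephasing R d r2) rho).
Proof.
move=> d_ge2 _ _; have quarter_ge0 : 0 <= 1 / 4%:R :> R[i].
  by rewrite divr_ge0 ?ler01 ?ler0n.
exists (uniform_state _ d); split.
  by apply/is_stateE/uniform_state_density/(leq_trans _ d_ge2).
rewrite /psucc_single /psucc_gen.
split=> [sigma | d' tau] t_state; rewrite lerD2l; apply: (ler_wpM2l quarter_ge0).
all: rewrite [X in _ <= X]trnorm_dephasingB_uniform //.
- exact: trnorm_dephasingB_le.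
- exact: trnorm_chan_tens_id_dephasingB_le.
Qed.
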